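(* Let $S$ and $T$ be valid configurations and $M:S\to T$ a bijection. Let $A=(A^S,A^T)$ and $B=(B^S,B^T)$ be two distinct pairs of $M$. Define $$\mathcal V^{(1)}_{AB}=\{\vec v\in\mathbb R^2 : D(A^S)\cap H_{\vec v}(B)\neq\emptyset\},\qquad \mathcal V^{(2)}_{AB}=\{\vec v\in\mathbb R^2 : D(B^T+\vec v)\cap H_{\vec v}(A)\neq\emptyset\}.$$ Then $$\mathcal V^{(1)}_{AB}=\bigl(W(A^S,B^S)\oplus D_2(o)\bigr)-B^T,\qquad \mathcal V^{(2)}_{AB}=\bigl(-W(B^T,A^T)\bigr)\oplus D_2(o)+A^S,$$ where $\oplus$ denotes Minkowski sum, $-X=\{-x:x\in X\}$, and $X+p=\{x+p:x\in X\}$.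
   Context: For $p\in\mathbb R^2$, $D(p)$ is the open unit disc centered at $p$ and $D_2(p)$ is the open disc of radius $2$ centered at $p$; $o$ is the origin. A configuration is a finite set of points in $\mathbb R^2$; it is valid if any two distinct points of it are at distance at least $2$. A pair of the bijection $M$ is $A=(A^S,A^T)$ with $A^S\in S$, $A^T=M(A^S)$. For a translation $\vec v\in\mathbb R^2$, the hippodrome $H_{\vec v}(A)$ is the convex hull of $D(A^S)\cup D(A^T+\vec v)$ (the region swept by a unit disc translated along the segment from $A^S$ to $A^T+\vec v$). For two points $a,b$ with $|a-b|\ge 2$, the wedge $W(a,b)$ is the closed wedge with apex $a$ whose bounding rays are parallel to, and directed like, the two common inner tangents of $D(b)$ and $D(a)$ directed from $b$ towards $a$; explicitly, $W(a,b)=\{a\}\cup\{a+w: w\neq 0,\ \angle(w,a-b)\le \arcsin(2/|a-b|)\}$, where $\angle(w,u)\in[0,\pi]$ is the angle between vectors $w$ and $u$. *)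

From Stdlib Require Import Reals Lra List.
Open Scope R_scope.

Definition point : Type := (R * R)%type.

Definition padd (p q : point) : point := (fst p + fst q, snd p + snd q).
Definition psub (p q : point) : point := (fst p - fst q, snd p - snd q).
Definition popp (p : point) : point := (- fst p, - snd p).
Definition pscale (t : R) (p : point) : point := (t * fst p, t * snd p).
Definition dot (p q : point) : R := fst p * fst q + snd p * snd q.
Definition norm (p : point) : R := sqrt (dot p p).
Definition dist (p q : point) : R := norm (psub p q).
Definition origin : point := (0, 0).

Definition D (p : point) : point -> Prop := fun x => dist x p < 1.
Definition D2 (p : point) : point -> Prop := fun x => dist x p < 2.

Definition valid (S : list point) : Prop :=
  NoDup S /\
  forall p q, In p S -> In q S -> p <> q -> 2 <= dist p q.

(* M : S -> T is a bijection (M given as a function on the plane,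
   only its values on S matter). *)
Definition bijection_on (S T : list point) (M : point -> point) : Prop :=
  (forall p, In p S -> In (M p) T) /\
  (forall p q, In p S -> In q S -> M p = M q -> p = q) /\
  (forall t, In t T -> exists p, In p S /\ M p = t).

Definition convex (C : point -> Prop) : Prop :=
  forall x y t, C x -> C y -> 0 <= t <= 1 ->
    C (padd (pscale (1 - t) x) (pscale t y)).

Definition convex_hull (X : point -> Prop) : point -> Prop :=
  fun z => forall C, convex C -> (forall y, X y -> C y) -> C z.

Definition hippodrome (v AS AT : point) : point -> Prop :=
  convex_hull (fun x => D AS x \/ D (padd AT v) x).

Definition angle (w u : point) : R := acos (dot w u / (norm w * norm u)).

Definition wedge (a b : point) : point -> Prop :=
  fun x => x = a \/
    exists w, w <> origin /\ x = padd a w /\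
      angle w (psub a b) <= asin (2 / dist a b).

Definition msum (X Y : point -> Prop) : point -> Prop :=
  fun z => exists x y, X x /\ Y y /\ z = padd x y.

From Stdlib Require Import Reals List Lra Psatz.
Open Scope R_scope.

(* Write u = a - b.  Three facts reduce the theorem to plane algebra.
   (1) The hippodrome, i.e. the convex hull of D(b) and D(q), is the open
       1-neighbourhood of the segment [b,q]; hence D(a) meets it iff the segment
       comes within distance 2 of a (disc_meets_hull_iff).
   (2) For |u| >= 2 the wedge W(a,b) is a + cone u, where cone u is the set of x
       with x.u >= 0 and |x|^2 (|u|^2 - 4) <= (x.u)^2, the algebraic form of
       "angle(x,u) <= asin(2/|u|)" (angle_cone, wedge_cone).
   (3) Key lemma: for |u| >= 2, the segment [b,q] meets D_2(a) iff
       q - a in cone u + D_2(o) (near_apex_iff, segment_near_iff).  One direction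
       scales the near point of the segment into the cone; the other exhibits a
       segment parameter explicitly.
   The first identity of the theorem is (1)+(3) with a = A^S, b = B^S,
   q = B^T + v.  The second is (1)+(3) with a = B^T + v, b = A^T + v, q = A^S,
   followed by translating the wedge by -v and reflecting through the origin
   (msum_translated_wedge_iff).  Validity of S and T gives |A^S - B^S| >= 2 and
   |B^T - A^T| >= 2. *)

Definition seg (b q : point) (t : R) : point := padd (pscale (1 - t) b) (pscale t q).

Ltac coords :=
  repeat match goal with p : point |- _ => destruct p end;
  unfold seg, padd, psub, popp, pscale, dot, origin in *; simpl in *.

Ltac point_ring := coords; f_equal; ring.

Lemma sqrt_lt_iff a r : 0 <= a -> 0 < r -> (sqrt a < r <-> a < r * r).
Proof.
  intros Ha Hr. pose proof (sqrt_square r (Rlt_le _ _ Hr)) as Er. split; intro H.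
  - apply sqrt_lt_0_alt. rewrite Er. exact H.
  - rewrite <- Er. apply sqrt_lt_1; nra.
Qed.

Lemma sqrt_le_iff a c : 0 <= a -> (sqrt a <= c <-> 0 <= c /\ a <= c * c).
Proof.
  intros Ha. pose proof (sqrt_pos a) as Hpos. pose proof (sqrt_sqrt a Ha) as Hsq. split.
  - intros H. split; [lra|]. assert (sqrt a * sqrt a <= c * c) by (apply Rmult_le_compat; lra). lra.
  - intros [Hc H]. rewrite <- (sqrt_square c Hc). apply sqrt_le_1_alt. exact H.
Qed.

Lemma div_nonneg a b : 0 <= a -> 0 < b -> 0 <= a / b.
Proof. intros Ha Hb. apply Rmult_le_pos; [exact Ha | apply Rlt_le, Rinv_0_lt_compat; exact Hb]. Qed.

Lemma le_scale_iff a b p : 0 < p -> (a <= b <-> a * p <= b * p).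
Proof.
  intros Hp. split; intro H; [apply Rmult_le_compat_r; lra | apply Rmult_le_reg_r with p; assumption].
Qed.

Lemma convex_comb_lt x y c s : 0 <= s <= 1 -> x < c -> y < c -> (1 - s) * x + s * y < c.
Proof. intros Hs Hx Hy. destruct (Req_dec s 0) as [->|Hs0]; [lra|]. nra. Qed.

(* acos is decreasing: comparison with an angle in [0, PI] via cosines. *)
Lemma acos_le_iff c a : -1 <= c <= 1 -> 0 <= a <= PI -> (acos c <= a <-> cos a <= c).
Proof.
  intros Hc Ha. pose proof (acos_bound c) as Hac. pose proof (cos_acos c Hc) as Ec. split; intro H.
  - destruct (Req_dec (acos c) a) as [<- | Hne]; [lra|].
    rewrite <- Ec. left. apply cos_decreasing_1; lra.
  - destruct (Rle_lt_dec (acos c) a) as [|Hlt]; [assumption|].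
    pose proof (cos_decreasing_1 a (acos c) ltac:(lra) ltac:(lra) ltac:(lra) ltac:(lra) Hlt). lra.
Qed.

Lemma asin_nonneg_range s : 0 <= s <= 1 -> 0 <= asin s <= PI.
Proof.
  intros Hs. pose proof (asin_bound s). pose proof PI_RGT_0. split; [|lra].
  destruct (Rle_lt_dec 0 (asin s)) as [|Hneg]; [assumption|].
  pose proof (sin_lt_0_var (asin s) ltac:(lra) Hneg). rewrite sin_asin in * by lra. lra.
Qed.

(* Squared distance; all metric conditions are handled in this polynomial form. *)
Definition sqdist (p q : point) : R := dot (psub p q) (psub p q).

Lemma dot_self_nonneg p : 0 <= dot p p.
Proof. coords; nra. Qed.

Lemma dot_self_zero p : dot p p = 0 -> p = origin.
Proof. coords; intros; f_equal; nra. Qed.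

Lemma dot_opp p : dot (popp p) (popp p) = dot p p.
Proof. coords; ring. Qed.

(* Lagrange's identity: |p|^2 |q|^2 - (p.q)^2 = (p1 q2 - p2 q1)^2. *)
Lemma cauchy_schwarz p q : dot p q * dot p q <= dot p p * dot q q.
Proof.
  destruct p as [p1 p2], q as [q1 q2]. unfold dot; simpl.
  pose proof (Rle_0_sqr (p1 * q2 - p2 * q1)). unfold Rsqr in *. nra.
Qed.

Lemma dist_lt_iff p q r : 0 < r -> (dist p q < r <-> sqdist p q < r * r).
Proof. intros Hr. apply sqrt_lt_iff; [apply dot_self_nonneg | exact Hr]. Qed.

Lemma dist_ge_sq p q r : 0 < r -> r <= dist p q -> r * r <= sqdist p q.
Proof.
  intros Hr H. destruct (Rlt_or_le (sqdist p q) (r * r)) as [Hlt|]; auto.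
  apply (dist_lt_iff p q r Hr) in Hlt. lra.
Qed.

Lemma psub_translate a b v : psub (padd a v) (padd b v) = psub a b.
Proof. point_ring. Qed.

Lemma dist_translate a b v : dist (padd a v) (padd b v) = dist a b.
Proof. unfold dist. rewrite psub_translate. reflexivity. Qed.

Lemma D_iff p z : D p z <-> sqdist z p < 1.
Proof. unfold D. rewrite dist_lt_iff by lra. lra. Qed.

Lemma D2_origin_iff d : D2 origin d <-> dot d d < 4.
Proof.
  unfold D2. rewrite dist_lt_iff by lra. unfold sqdist.
  replace (psub d origin) with d by point_ring. lra.
Qed.

Lemma norm_sum_sq_lt e d a b : 0 <= a -> 0 < b ->
  dot e e <= a * a -> dot d d < b * b -> dot (padd e d) (padd e d) < (a + b) * (a + b).
Proof.
  intros Ha Hb He Hd. pose proof (cauchy_schwarz e d) as HCS.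
  assert (Hed : dot e d <= a * b).
  { destruct (Rle_lt_dec (dot e d) (a * b)) as [|Hlt]; auto.
    pose proof (dot_self_nonneg e). pose proof (dot_self_nonneg d).
    assert (dot e e * dot d d <= a * a * (b * b)) by (apply Rmult_le_compat; lra).
    assert (a * b * (a * b) < dot e d * dot e d) by (apply Rmult_le_0_lt_compat; nra).
    lra. }
  replace (dot (padd e d) (padd e d)) with (dot e e + 2 * dot e d + dot d d) by (coords; ring).
  nra.
Qed.

Lemma unit_discs_meet_iff a p :
  (exists z, sqdist z a < 1 /\ sqdist z p < 1) <-> sqdist a p < 4.
Proof.
  split.
  - (* parallelogram law: |a-p|^2 = 2|z-a|^2 + 2|z-p|^2 - |2z-a-p|^2 *)
    intros [z [Ha Hp]].
    pose proof (dot_self_nonneg (psub (pscale 2 z) (padd a p))).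
    unfold sqdist in *. coords. nra.
  - intros H. exists (pscale (/2) (padd a p)). unfold sqdist in *. coords. split; nra.
Qed.

Definition near_segment (b q : point) (r : R) : point -> Prop :=
  fun z => exists t, 0 <= t <= 1 /\ sqdist z (seg b q t) < r * r.

(* Convexity of the squared norm, via
   |(1-s)e + sf|^2 = (1-s)|e|^2 + s|f|^2 - s(1-s)|e-f|^2. *)
Lemma dot_self_convex e f s : 0 <= s <= 1 ->
  dot (padd (pscale (1 - s) e) (pscale s f)) (padd (pscale (1 - s) e) (pscale s f))
  <= (1 - s) * dot e e + s * dot f f.
Proof.
  intros Hs. pose proof (dot_self_nonneg (psub e f)) as Hef.
  assert (0 <= s * (1 - s)) by nra.
  replace ((1 - s) * dot e e + s * dot f f) with
    (dot (padd (pscale (1 - s) e) (pscale s f)) (padd (pscale (1 - s) e) (pscale s f))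
     + s * (1 - s) * dot (psub e f) (psub e f)) by (coords; ring).
  nra.
Qed.

(* The r-neighbourhood of a segment is convex: combine the two parameters. *)
Lemma near_segment_convex b q r : convex (near_segment b q r).
Proof.
  intros x y s [t1 [Ht1 Hx]] [t2 [Ht2 Hy]] Hs.
  exists ((1 - s) * t1 + s * t2). split; [nra|].
  unfold sqdist in *.
  replace (psub (padd (pscale (1 - s) x) (pscale s y)) (seg b q ((1 - s) * t1 + s * t2)))
    with (padd (pscale (1 - s) (psub x (seg b q t1))) (pscale s (psub y (seg b q t2))))
    by point_ring.
  eapply Rle_lt_trans; [apply dot_self_convex; exact Hs|]. apply convex_comb_lt; assumption.
Qed.

(* Fact (1): the hippodrome is the unit neighbourhood of its axis.  It is convex
   and contains both discs; conversely z = seg t + e is a convex combination of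
   b + e in D(b) and q + e in D(q). *)
Lemma hull_of_discs_iff b q z :
  convex_hull (fun x => D b x \/ D q x) z <-> near_segment b q 1 z.
Proof.
  split.
  - intros Hz. apply Hz; [apply near_segment_convex|].
    intros y [Hy | Hy]; apply D_iff in Hy; [exists 0 | exists 1]; split; try lra;
      [replace (seg b q 0) with b by point_ring | replace (seg b q 1) with q by point_ring];
      lra.
  - intros [t [Ht Hz]] C HC Hsub.
    unfold sqdist in Hz. set (e := psub z (seg b q t)) in Hz.
    assert (Hb : C (padd b e)).
    { apply Hsub. left. apply D_iff. unfold sqdist. replace (psub (padd b e) b) with e by point_ring. lra. }
    assert (Hq : C (padd q e)).
    { apply Hsub. right. apply D_iff. unfold sqdist. replace (psub (padd q e) q) with e by point_ring. lra. }
    replace z with (padd (pscale (1 - t) (padd b e)) (pscale t (padd q e))) by (unfold e; point_ring).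
    apply HC; assumption.
Qed.

Lemma disc_meets_hull_iff a b q :
  (exists z, D a z /\ convex_hull (fun x => D b x \/ D q x) z) <-> near_segment b q 2 a.
Proof.
  split.
  - intros [z [Hza Hz]]. apply hull_of_discs_iff in Hz. destruct Hz as [t [Ht Hz]].
    exists t. split; [exact Ht|]. apply D_iff in Hza.
    replace (2 * 2) with 4 by ring. apply unit_discs_meet_iff. exists z. lra.
  - intros [t [Ht Ha]]. replace (2 * 2) with 4 in Ha by ring.
    apply unit_discs_meet_iff in Ha. destruct Ha as [z [Hza Hz]].
    exists z. split; [apply D_iff; exact Hza|].
    apply hull_of_discs_iff. exists t. split; [exact Ht | lra].
Qed.

(* The closed cone of vectors x at angle at most asin(2/|u|) from u, in
   algebraic form (see angle_cone); W(a,b) = a + cone (a - b). *)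
Definition cone (u x : point) : Prop :=
  0 <= dot x u /\ dot x x * (dot u u - 4) <= dot x u * dot x u.

Lemma dot_scale c p : dot (pscale c p) (pscale c p) = c * c * dot p p.
Proof. coords; ring. Qed.

Lemma cone_scale u x l : 0 <= l -> cone u x -> cone u (pscale l x).
Proof.
  intros Hl [Hk HX]. unfold cone.
  replace (dot (pscale l x) u) with (l * dot x u) by (coords; ring).
  rewrite dot_scale. split; [nra|].
  assert (0 <= l * l) by nra. nra.
Qed.

(* For |u| >= 2 the disc D_2(u) lies in cone u: the two tangents from the
   origin to D_2(u) bound the cone.  The key identity is
   (L + c)^2 - (L + 2c + r)(L - 4) = (c + 4)^2 + (4 - r)(L - 4)
   with L = |u|^2, c = p.u, r = |p|^2. *)
Lemma cone_contains_disc u p : 4 <= dot u u -> dot p p < 4 -> cone u (padd u p).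
Proof.
  intros HL Hp. pose proof (cauchy_schwarz p u) as HCS.
  unfold cone.
  replace (dot (padd u p) u) with (dot u u + dot p u) by (coords; ring).
  replace (dot (padd u p) (padd u p)) with (dot u u + 2 * dot p u + dot p p) by (coords; ring).
  set (L := dot u u) in *. set (c := dot p u) in *. set (r := dot p p) in *.
  assert (0 <= r) by apply dot_self_nonneg.
  split.
  - assert (c * c < L * L) by nra. nra.
  - assert (0 <= (4 - r) * (L - 4)) by nra. pose proof (Rle_0_sqr (c + 4)).
    unfold Rsqr in *. nra.
Qed.

(* With the apex a moved to the origin, u = a - b and w = q - b, the segment
   [b,q] is {u - t w : 0 <= t <= 1} up to sign; near_apex u w says that it
   meets D_2(o). *)
Definition near_apex (u w : point) : Prop :=
  exists t, 0 <= t <= 1 /\ dot (psub u (pscale t w)) (psub u (pscale t w)) < 4.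

(* Key lemma, forward direction: if the segment meets D_2(o) at u - t w, then
   w - u = x + d with d = t w - u and x = (1-t) w = ((1-t)/t) (u + d) in the cone. *)
Lemma near_apex_to_cone_sum u w : 4 <= dot u u ->
  near_apex u w -> exists x d, cone u x /\ dot d d < 4 /\ w = padd u (padd x d).
Proof.
  intros HL [t [Ht Hp]].
  set (d := psub (pscale t w) u).
  assert (Hd : dot d d < 4).
  { replace d with (popp (psub u (pscale t w))) by (unfold d; point_ring). rewrite dot_opp. exact Hp. }
  assert (Ht0 : t <> 0).
  { intros ->. replace (psub u (pscale 0 w)) with u in Hp by point_ring. lra. }
  exists (pscale (1 - t) w), d. split; [|split; [exact Hd | unfold d; point_ring]].
  replace (pscale (1 - t) w) with (pscale ((1 - t) / t) (padd u d))
    by (unfold d; coords; f_equal; field; exact Ht0).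
  apply cone_scale; [apply div_nonneg; lra|].
  apply cone_contains_disc; assumption.
Qed.

Lemma segment_enters_disc u w : dot u u <= 4 -> 0 < dot u w -> near_apex u w.
Proof.
  intros HL Hg. pose proof (dot_self_nonneg w) as HW.
  set (g := dot u w) in *. set (W := dot w w) in *.
  set (t := g / (g + W)).
  assert (Htg : t * (g + W) = g) by (unfold t; field; lra).
  assert (0 < t) by (unfold t; apply Rdiv_lt_0_compat; lra).
  exists t. split; [nra|].
  replace (dot (psub u (pscale t w)) (psub u (pscale t w))) with (dot u u - 2 * t * g + t * t * W)
    by (unfold g, W; coords; ring).
  nra.
Qed.

(* Key lemma, backward direction, for x.u > 0: the parameter t = k/(k+X),
   with k = x.u and X = |x|^2, works since (k+X)(u - tw) = (Xu - kx) - kd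
   and |Xu - kx|^2 = X(X|u|^2 - k^2) <= 4X^2 inside the cone. *)
Lemma cone_interior_near_apex u x d : cone u x -> 0 < dot x u -> dot d d < 4 ->
  near_apex u (padd u (padd x d)).
Proof.
  intros [_ HK] Hk Hd. pose proof (dot_self_nonneg x) as HX.
  set (k := dot x u) in *. set (X := dot x x) in *.
  set (e := psub (pscale X u) (pscale k x)).
  set (f := pscale (- k) d).
  assert (He : dot e e <= (2 * X) * (2 * X)).
  { replace (dot e e) with (X * (X * dot u u - k * k)) by (unfold e, k, X; coords; ring). nra. }
  assert (Hf : dot f f < (2 * k) * (2 * k)).
  { unfold f. rewrite dot_scale. replace ((2 * k) * (2 * k)) with (- k * - k * 4) by ring.
    apply Rmult_lt_compat_l; [nra | exact Hd]. }
  pose proof (norm_sum_sq_lt e f (2 * X) (2 * k) ltac:(lra) ltac:(lra) He Hf) as Hef.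
  exists (k / (k + X)). split.
  { split; [apply div_nonneg; lra|]. apply Rmult_le_reg_r with (k + X); [lra|].
    field_simplify; lra. }
  replace (psub u (pscale (k / (k + X)) (padd u (padd x d)))) with (pscale (/ (k + X)) (padd e f))
    by (unfold e, f; coords; f_equal; field; lra).
  rewrite dot_scale.
  replace 4 with (/ (k + X) * / (k + X) * ((2 * X + 2 * k) * (2 * X + 2 * k))) by (field; lra).
  apply Rmult_lt_compat_l; [|exact Hef].
  assert (0 < / (k + X)) by (apply Rinv_0_lt_compat; lra). nra.
Qed.

(* Key lemma, backward direction: the apex, the interior and the boundary
   case x.u = 0 (possible only when |u| = 2). *)
Lemma cone_sum_to_near_apex u x d : 4 <= dot u u -> cone u x -> dot d d < 4 ->
  near_apex u (padd u (padd x d)).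
Proof.
  intros HL Hx Hd. pose proof (dot_self_nonneg x) as HX.
  destruct (Req_dec (dot x x) 0) as [HX0 | HX0].
  - (* apex: the end point q = a + d itself lies in D_2(a) *)
    apply dot_self_zero in HX0. subst x. exists 1. split; [lra|].
    replace (psub u (pscale 1 (padd u (padd origin d)))) with (popp d) by point_ring.
    rewrite dot_opp. exact Hd.
  - destruct Hx as [Hk HK]. destruct (Rlt_or_le 0 (dot x u)) as [Hk0 | Hk0].
    + apply cone_interior_near_apex; [split|..]; assumption.
    + (* boundary ray through the tangency: then |u| = 2 and the segment enters inward *)
      assert (HL4 : dot u u = 4) by nra.
      apply segment_enters_disc; [lra|].
      pose proof (cauchy_schwarz u d) as HCS.
      replace (dot u (padd u (padd x d))) with (dot u u + dot x u + dot u d) by (coords; ring).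
      nra.
Qed.

Lemma near_apex_iff u w : 4 <= dot u u ->
  near_apex u w <-> exists x d, cone u x /\ dot d d < 4 /\ w = padd u (padd x d).
Proof.
  intros HL. split; [apply near_apex_to_cone_sum; exact HL|].
  intros [x [d [Hx [Hd ->]]]]. apply cone_sum_to_near_apex; assumption.
Qed.

(* Fact (2): with c = cos angle(x,u) and s = 2/|u|, the condition
   acos c <= asin s reads sqrt(1 - s^2) <= c, i.e. c >= 0 and 1 - s^2 <= c^2;
   multiplying by |x|^2 |u|^2 gives the cone inequalities. *)
Lemma angle_cone x u : x <> origin -> 4 <= dot u u ->
  (angle x u <= asin (2 / norm u) <-> cone u x).
Proof.
  intros Hx HL. unfold angle, cone. pose proof (cauchy_schwarz x u) as HCS.
  assert (HX : 0 < dot x x).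
  { pose proof (dot_self_nonneg x). destruct (Req_dec (dot x x) 0) as [E|]; [|lra].
    apply dot_self_zero in E. contradiction. }
  set (X := dot x x) in *. set (L := dot u u) in *. set (k := dot x u) in *.
  set (y := norm x). set (m := norm u).
  assert (Hy2 : y * y = X) by (apply sqrt_sqrt; lra).
  assert (Hm2 : m * m = L) by (apply sqrt_sqrt; lra).
  assert (0 <= y) by apply sqrt_pos. assert (0 <= m) by apply sqrt_pos.
  assert (Hy : 0 < y) by (destruct (Req_dec y 0) as [E|]; [rewrite E in Hy2; lra | lra]).
  assert (Hm : 2 <= m) by nra.
  assert (Hym : 0 < y * m) by nra.
  set (c := k / (y * m)). set (s := 2 / m).
  assert (Ec : c * c * (X * L) = k * k) by (unfold c; rewrite <- Hy2, <- Hm2; field; lra).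
  assert (Es : (1 - s²) * (X * L) = X * (L - 4)) by (unfold s, Rsqr; rewrite <- Hm2; field; nra).
  assert (Hcc : c * c <= 1) by (apply (le_scale_iff _ _ (X * L)); nra).
  assert (Hc : -1 <= c <= 1) by nra.
  assert (Hs : 0 <= s <= 1).
  { unfold s. split; [apply div_nonneg; nra|]. apply Rmult_le_reg_r with m; [nra|].
    field_simplify; nra. }
  assert (Hs2 : 0 <= 1 - s²) by (unfold Rsqr; nra).
  rewrite (acos_le_iff c _ Hc (asin_nonneg_range s Hs)), cos_asin, sqrt_le_iff by lra.
  assert (Ek : 0 <= c <-> 0 <= k).
  { rewrite (le_scale_iff 0 c (y * m) Hym). unfold c.
    replace (k / (y * m) * (y * m)) with k by (field; lra). rewrite Rmult_0_l. reflexivity. }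
  assert (EK : 1 - s² <= c * c <-> X * (L - 4) <= k * k).
  { rewrite (le_scale_iff _ _ (X * L)) by nra. rewrite Ec, Es. reflexivity. }
  rewrite Ek, EK. reflexivity.
Qed.

Lemma cone_origin u : cone u origin.
Proof. unfold cone. coords. split; nra. Qed.

Lemma wedge_cone a b w : 2 <= dist a b -> (wedge a b w <-> cone (psub a b) (psub w a)).
Proof.
  intros Hd. pose proof (dist_ge_sq a b 2 ltac:(lra) Hd) as HL. unfold sqdist in HL.
  unfold wedge, dist. split.
  - intros [-> | [x [Hx [-> Hang]]]].
    + replace (psub a a) with origin by point_ring. apply cone_origin.
    + replace (psub (padd a x) a) with x by point_ring. apply angle_cone; [exact Hx | lra | exact Hang].
  - intros Hc. destruct (Req_dec (dot (psub w a) (psub w a)) 0) as [E | E].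
    + left. apply dot_self_zero in E. coords. injection E as E1 E2. f_equal; lra.
    + assert (Hx : psub w a <> origin) by (intros E0; rewrite E0 in E; apply E; point_ring).
      right. exists (psub w a). split; [exact Hx | split; [point_ring |]].
      apply angle_cone; [exact Hx | lra | exact Hc].
Qed.

Lemma wedge_translate a b w v : wedge (padd a v) (padd b v) (padd w v) <-> wedge a b w.
Proof.
  unfold wedge. rewrite dist_translate, psub_translate.
  split; intros [E | [x [Hx [E Hang]]]].
  - left. coords. injection E as E1 E2. f_equal; lra.
  - right. exists x. repeat split; [exact Hx | | exact Hang]. coords. injection E as E1 E2. f_equal; lra.
  - left. subst w. reflexivity.
  - right. exists x. repeat split; [exact Hx | | exact Hang]. subst w. point_ring.
Qed.

Lemma segment_near_iff a b q : 2 <= dist a b ->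
  (near_segment b q 2 a <-> msum (wedge a b) (D2 origin) q).
Proof.
  intros Hd. pose proof (dist_ge_sq a b 2 ltac:(lra) Hd) as HL. unfold sqdist in HL.
  assert (Eseg : forall t, sqdist a (seg b q t)
                   = dot (psub (psub a b) (pscale t (psub q b))) (psub (psub a b) (pscale t (psub q b)))).
  { intros t. unfold sqdist. replace (psub a (seg b q t)) with (psub (psub a b) (pscale t (psub q b)))
      by point_ring. reflexivity. }
  unfold near_segment. setoid_rewrite Eseg. replace (2 * 2) with 4 by ring.
  fold (near_apex (psub a b) (psub q b)).
  rewrite (near_apex_iff (psub a b) (psub q b) ltac:(lra)). split.
  - intros [x [d [Hx [Hdd Hq]]]]. exists (padd a x), d. split; [|split].
    + apply wedge_cone; [exact Hd|]. replace (psub (padd a x) a) with x by point_ring. exact Hx.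
    + apply D2_origin_iff. exact Hdd.
    + coords. injection Hq as E1 E2. f_equal; lra.
  - intros [w [d [Hw [Hdd ->]]]]. exists (psub w a), d. split; [|split].
    + apply wedge_cone in Hw; assumption.
    + apply D2_origin_iff. exact Hdd.
    + point_ring.
Qed.

Lemma disc_meets_hull_wedge_iff a b q : 2 <= dist a b ->
  (exists z, D a z /\ convex_hull (fun x => D b x \/ D q x) z) <-> msum (wedge a b) (D2 origin) q.
Proof. intros Hd. rewrite disc_meets_hull_iff. apply segment_near_iff, Hd. Qed.

Lemma convex_hull_or_comm (P Q : point -> Prop) z :
  convex_hull (fun x => P x \/ Q x) z -> convex_hull (fun x => Q x \/ P x) z.
Proof. intros Hz C HC Hsub. apply Hz; [exact HC | intros y Hy; apply Hsub; tauto]. Qed.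

Lemma D2_origin_opp d : D2 origin (popp d) <-> D2 origin d.
Proof. rewrite !D2_origin_iff, dot_opp. reflexivity. Qed.

Lemma msum_translated_wedge_iff a b v q :
  msum (wedge (padd a v) (padd b v)) (D2 origin) q <->
  msum (fun x => wedge a b (popp x)) (D2 origin) (psub v q).
Proof.
  split.
  - intros [w [d [Hw [Hd ->]]]]. exists (psub v w), (popp d). split; [|split].
    + apply wedge_translate with (v := v).
      replace (padd (popp (psub v w)) v) with w by point_ring. exact Hw.
    + apply D2_origin_opp. exact Hd.
    + point_ring.
  - intros [x [d [Hx [Hd E]]]]. exists (padd (popp x) v), (popp d). split; [|split].
    + apply wedge_translate. exact Hx.
    + apply D2_origin_opp. exact Hd.
    + coords. injection E as E1 E2. f_equal; lra.
Qed.

Theorem mainTheorem1 (S T : list point) (M : point -> point)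
  (AS BS : point) :
  valid S -> valid T -> bijection_on S T M ->
  In AS S -> In BS S -> AS <> BS ->
  let AT := M AS in let BT := M BS in
  (forall v : point,
     (exists z, D AS z /\ hippodrome v BS BT z) <->
     (exists y, msum (wedge AS BS) (D2 origin) y /\ v = psub y BT)) /\
  (forall v : point,
     (exists z, D (padd BT v) z /\ hippodrome v AS AT z) <->
     (exists y, msum (fun x => wedge BT AT (popp x)) (D2 origin) y /\
                v = padd y AS)).
Proof.
  intros [_ HS] [_ HT] [HMT [HMinj _]] HA HB HAB AT BT.
  assert (HdS : 2 <= dist AS BS) by (apply HS; assumption).
  assert (HdT : 2 <= dist BT AT).
  { apply HT; try (apply HMT; assumption). intros E. apply HAB, HMinj; auto. }
  clearbody AT BT. unfold hippodrome. split; intro v.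
  - rewrite (disc_meets_hull_wedge_iff _ _ _ HdS). split.
    + intros H. exists (padd BT v). split; [exact H | point_ring].
    + intros [y [Hy ->]]. replace (padd BT (psub y BT)) with y by point_ring. exact Hy.
  - assert (HdT' : 2 <= dist (padd BT v) (padd AT v)) by (rewrite dist_translate; exact HdT).
    transitivity (msum (wedge (padd BT v) (padd AT v)) (D2 origin) AS).
    { rewrite <- (disc_meets_hull_wedge_iff _ _ _ HdT').
      split; intros [z [Hz Hh]]; exists z; (split; [exact Hz | apply convex_hull_or_comm; exact Hh]). }
    rewrite msum_translated_wedge_iff. split.
    + intros H. exists (psub v AS). split; [exact H | point_ring].
    + intros [y [Hy ->]]. replace (psub (padd y AS) AS) with y by point_ring. exact Hy.
Qed.
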